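(* Let $k\ge r\ge3$ and $p,t\ge0$ be integers and let $\pi\in\mathbb{C}_{<}(k,r|p,t)$ be such that $\pi^{(2)}_p=2t+2$ and $\pi^{(2)}_p$ is of starting type $s_3$. Let $p_1$ be the smallest integer with $1\le p_1\le p$ such that $\pi^{(2)}_{p_1}=\pi^{(2)}_{p}+4(p-p_1)$ and $\pi^{(2)}_{p},\pi^{(2)}_{p-1},\dots,\pi^{(2)}_{p_1}$ are all of the same starting type. Then the integer $\pi^{(2)}_{p_1}+4$ occurs at most once as a part of $\pi$.
   Context: A partition $\pi=(\pi_1,\dots,\pi_\ell)$ is a finite non-increasing sequence of positive integers; ''$a$ occurs in $\pi$'' means $a=\pi_i$ for some $i$. Göllnitz–Gordon marking: $GG(\pi)$ assigns a positive integer (mark) to each part, processing the parts from smallest to largest; $\pi_i$ receives the smallest positive integer different from the marks of all parts $\pi_g$ with $g>i$ and $\pi_i-\pi_g\le 2$, where $\pi_i-\pi_g<2$ is required when $\pi_i$ is odd. An ''$r$-marked part $a$'' is a part equal to $a$ with mark $r$. $N_i(\pi)$ is the number of parts with mark $i$; $\pi^{(i)}_1\ge\dots\ge\pi^{(i)}_{N_i(\pi)}$ are the parts with mark $i$, with $\pi^{(i)}_0=+\infty$, $\pi^{(i)}_{N_i(\pi)+1}=-\infty$. $\mathbb{C}(k,r)$: partitions with (i) no odd part repeated; (ii) $\pi_i\ge\pi_{i+k-1}+2$ for $1\le i\le\ell-k+1$, strict if $\pi_i$ even; (iii) at most $r-1$ parts $\le 2$. Starting types: for $\pi\in\mathbb{C}(k,r)$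 with $N_2=N_2(\pi)\ge1$, let $l$ be the largest integer in $\{0,\dots,N_2\}$ such that no odd part of $\pi$ is $\ge\pi^{(2)}_l$; for $l<i\le N_2$, $\pi^{(2)}_i$ has type $s_{-1}$. For $b=1,\dots,l$ in increasing order, type and auxiliary $\sigma_b$: for $b=1$: Case 1: 1-marked part $\pi^{(2)}_1-1$ exists and $\pi^{(2)}_1+2$ does not occur: type $s_0$, $\sigma_1=\pi^{(2)}_1-1$; Case 2: 1-marked $\pi^{(2)}_1-2$ exists and $\pi^{(2)}_1+2$ does not occur: type $s_1$, $\sigma_1=\pi^{(2)}_1-2$; Case 3: 1-marked $\pi^{(2)}_1+2$ exists: type $s_2$, $\sigma_1=\pi^{(2)}_1+2$; Case 4: 1-marked $\pi^{(2)}_1$ exists: type $s_3$, $\sigma_1=\pi^{(2)}_1$. For $2\le b\le l$: Case 1: 1-marked $\pi^{(2)}_b-1$ exists and, if a 1-marked $\pi^{(2)}_b+2$ exists, $\sigma_{b-1}=\pi^{(2)}_b+2$: type $s_0$, $\sigma_b=\pi^{(2)}_b-1$; Case 2: same with $\pi^{(2)}_b-2$: type $s_1$, $\sigma_b=\pi^{(2)}_b-2$; Case 3: 1-marked $\pi^{(2)}_b+2$ exists and $\sigma_{b-1}\ne\pi^{(2)}_b+2$: type $s_2$, $\sigma_b=\pi^{(2)}_b+2$; Case 4: 1-marked $\pi^{(2)}_b$ exists: type $s_3$, $\sigma_b=\pi^{(2)}_b$. $\mathbb{C}_{<}(k,r|p,t)$: the set of $\pi\in\mathbb{C}(k,r)$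 such that (1) no odd part is $\ge 2t+1$; (2) $\pi^{(2)}_{p+1}<2t+1<\pi^{(2)}_p$ (in particular $p\le N_2(\pi)$); (3) if $\pi^{(2)}_p=2t+2$ then it is of starting type $s_2$ or $s_3$; (4) if $\pi^{(2)}_{p+1}=2t$ then it is of starting type $s_0$ or $s_1$. The index $p_1$ in the claim is what the paper calls the first starting cluster index of $\pi$. *)

(* Partitions are sequences of nats, listed non-increasingly:
   pi = [:: pi_1; pi_2; ...; pi_l].  Indices in the paper are 1-based. *)
From mathcomp Require Import all_boot.
Set Implicit Arguments.
Unset Strict Implicit.
Unset Printing Implicit Defensive.

Definition is_partition (pi : seq nat) : bool :=
  sorted geq pi && all (fun x => 0 < x) pi.

Definition part (pi : seq nat) (i : nat) : nat := nth 0 pi i.-1.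

Definition smallest_pos_not_in (L : seq nat) : nat :=
  nth 0 [seq n <- iota 1 (size L).+1 | n \notin L] 0.

Definition gg_close (x y : nat) : bool :=
  if odd x then x - y < 2 else x - y <= 2.

(* GG marking.  For a partition written non-increasingly, the mark of the
   head part x depends only on the marks of the later (smaller) parts;
   gg_marks pi is the list of marks, aligned with pi. *)
Fixpoint gg_marks (pi : seq nat) : seq nat :=
  match pi with
  | [::] => [::]
  | x :: s =>
      let ms := gg_marks s in
      smallest_pos_not_in
        [seq z.2 | z <- zip s ms & gg_close x z.1] :: ms
  end.

Definition marked_parts (i : nat) (pi : seq nat) : seq nat :=
  [seq z.1 | z <- zip pi (gg_marks pi) & z.2 == i].

Definition Nmark (i : nat) (pi : seq nat) : nat := size (marked_parts i pi).

(* pi^(2)_j for 1 <= j <= N_2(pi) (the conventions pi^(2)_0 = +oo and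
   pi^(2)_(N_2+1) = -oo are handled explicitly where they matter) *)
Definition pi2 (pi : seq nat) (j : nat) : nat := nth 0 (marked_parts 2 pi) j.-1.

Definition one_marked (pi : seq nat) (a : nat) : bool :=
  (a, 1) \in zip pi (gg_marks pi).

Definition occurs (pi : seq nat) (a : nat) : bool := a \in pi.

Definition in_C (k r : nat) (pi : seq nat) : Prop :=
  is_partition pi /\
  (forall x, odd x -> count_mem x pi <= 1) /\
  (forall i, 1 <= i -> i + k - 1 <= size pi ->
     if odd (part pi i) then part pi (i + k - 1) + 2 <= part pi i
     else part pi (i + k - 1) + 2 < part pi i) /\
  count (fun x => x <= 2) pi <= r - 1.

(* starting types; s_none is a default that is used only if no case applies *)
Inductive stype := s_m1 | s_0 | s_1 | s_2 | s_3 | s_none.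

(* l : the largest integer in {0,...,N_2} such that no odd part of pi is
   >= pi^(2)_l  (with pi^(2)_0 = +oo, so l = 0 always qualifies) *)
Definition no_odd_above (pi : seq nat) (j : nat) : bool :=
  (j == 0) || all (fun x => odd x ==> (x < pi2 pi j)) pi.

Definition start_l (pi : seq nat) : nat :=
  \max_(0 <= j < (Nmark 2 pi).+1 | no_odd_above pi j) j.

(* one step of the starting-type recursion: given sigma_{b-1}
   (None when b = 1) and y = pi^(2)_b, returns (type, sigma_b).
   The cases are tried in the order 1,2,3,4 of the paper. *)
Definition stype_step (pi : seq nat) (prev : option nat) (y : nat)
  : stype * nat :=
  match prev with
  | None =>
      if one_marked pi (y - 1) && ~~ occurs pi (y + 2) then (s_0, y - 1)
      else if one_marked pi (y - 2) && ~~ occurs pi (y + 2) then (s_1, y - 2)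
      else if one_marked pi (y + 2) then (s_2, y + 2)
      else if one_marked pi y then (s_3, y)
      else (s_none, 0)
  | Some sg =>
      let C := one_marked pi (y + 2) ==> (sg == y + 2) in
      if one_marked pi (y - 1) && C then (s_0, y - 1)
      else if one_marked pi (y - 2) && C then (s_1, y - 2)
      else if one_marked pi (y + 2) && (sg != y + 2) then (s_2, y + 2)
      else if one_marked pi y then (s_3, y)
      else (s_none, 0)
  end.

Fixpoint stypes_aux (pi : seq nat) (prev : option nat) (ys : seq nat)
  : seq stype :=
  match ys with
  | [::] => [::]
  | y :: ys' =>
      let ts := stype_step pi prev y in
      ts.1 :: stypes_aux pi (Some ts.2) ys'
  end.

Definition start_type (pi : seq nat) (b : nat) : stype :=
  if b <= start_l pi then
    nth s_none (stypes_aux pi None (take (start_l pi) (marked_parts 2 pi))) b.-1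
  else s_m1.

Definition in_Clt (k r p t : nat) (pi : seq nat) : Prop :=
  in_C k r pi /\
  (forall x, x \in pi -> odd x -> x < 2 * t + 1) /\
  (* (2) pi^(2)_{p+1} < 2t+1 < pi^(2)_p, with pi^(2)_0 = +oo,
         pi^(2)_{N_2+1} = -oo; in particular p <= N_2 *)
  p <= Nmark 2 pi /\
  (0 < p -> 2 * t + 1 < pi2 pi p) /\
  (p + 1 <= Nmark 2 pi -> pi2 pi (p + 1) < 2 * t + 1) /\
  (0 < p -> pi2 pi p = 2 * t + 2 ->
     start_type pi p = s_2 \/ start_type pi p = s_3) /\
  (p + 1 <= Nmark 2 pi -> pi2 pi (p + 1) = 2 * t ->
     start_type pi (p + 1) = s_0 \/ start_type pi (p + 1) = s_1).

From mathcomp Require Import all_boot zify.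
Set Implicit Arguments.
Unset Strict Implicit.
Unset Printing Implicit Defensive.

(* Write y for pi^(2)_{p1} = 2t + 2 + 4(p - p1).  It is even, and y + 1, y + 3
   are odd and larger than 2t + 1, so they are not parts.  Since pi^(2)_{p1} has
   starting type s_3, y carries both marks 1 and 2, hence every part y + 2
   carries a mark >= 3.  If y + 4 occurred twice, the only parts within GG
   distance of a copy of y + 4 below it would be copies of y + 4 and y + 2, so
   the marks 1 and 2 would both be taken by copies of y + 4.  Then y + 4 would
   be the 2-marked part immediately above y, i.e. pi^(2)_{p1-1} = y + 4, again
   of starting type s_3, contradicting the minimality of p1. *)

Lemma smallest_pos_not_inP (L : seq nat) :
  [/\ 0 < smallest_pos_not_in L, smallest_pos_not_in L \notin L &
      forall v, 0 < v < smallest_pos_not_in L -> v \in L].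
Proof.
rewrite /smallest_pos_not_in.
set F := [seq n <- iota 1 (size L).+1 | n \notin L].
have memF v : v \in F = (v \notin L) && (0 < v < (size L).+2).
  by rewrite mem_filter mem_iota add1n.
have sortedF : sorted ltn F.
  by apply: sorted_filter; [exact: ltn_trans | exact: iota_ltn_sorted].
case: F memF sortedF => [|n0 F] memF sortedF.
  suff /(uniq_leq_size (iota_uniq _ _)) : {subset iota 1 (size L).+1 <= L}.
    by rewrite size_iota ltnn.
  move=> v; rewrite mem_iota add1n => v_range; apply/negPn/negP => vL.
  by have := memF v; rewrite in_nil vL v_range.
have := memF n0; rewrite inE eqxx => /esym/andP[n0L /andP[n0_gt0 n0_lt]].
split=> // v /andP[v_gt0 v_lt]; apply/negPn/negP => vL.
have := memF v; rewrite vL v_gt0 (leq_trans v_lt (ltnW n0_lt)) inE.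
case/orP=> [/eqP v_n0|vF]; first by rewrite v_n0 ltnn in v_lt.
by have /allP/(_ v vF) := order_path_min ltn_trans sortedF; rewrite ltnNge ltnW.
Qed.

Lemma size_gg_marks pi : size (gg_marks pi) = size pi.
Proof. by elim: pi => //= x s ->. Qed.

Lemma gg_marks_drop pi i : gg_marks (drop i pi) = drop i (gg_marks pi).
Proof. by elim: pi i => [|x s IH] [|i] //=. Qed.

Definition gg_mark (pi : seq nat) (i : nat) : nat := nth 0 (gg_marks pi) i.

Definition close_later_marks (pi : seq nat) (i : nat) : seq nat :=
  [seq z.2 | z <- zip (drop i.+1 pi) (drop i.+1 (gg_marks pi))
           & gg_close (nth 0 pi i) z.1].

Lemma gg_markE pi i : i < size pi ->
  gg_mark pi i = smallest_pos_not_in (close_later_marks pi i).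
Proof.
move=> lt_i; have := gg_marks_drop pi i.
by rewrite (drop_nth 0 lt_i) (@drop_nth _ 0 i) ?size_gg_marks //= gg_marks_drop => -[].
Qed.

Lemma mem_close_later_marks pi i v : i < size pi ->
  reflect (exists j, [/\ i < j < size pi, gg_close (nth 0 pi i) (nth 0 pi j)
                       & gg_mark pi j = v])
          (v \in close_later_marks pi i).
Proof.
move=> lt_i.
have size_drops : size (drop i.+1 pi) = size (drop i.+1 (gg_marks pi)).
  by rewrite !size_drop size_gg_marks.
apply: (iffP mapP) => [[[a m]]|[j [/andP[lt_ij lt_j] close_ij <-]]].
  rewrite mem_filter /= => /andP[close_a /(nthP (0, 0))[k]].
  rewrite size_zip size_drops minnn size_drop size_gg_marks => lt_k.
  rewrite nth_zip // !nth_drop => -[a_def m_def] ->; rewrite -a_def in close_a.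
  by exists (i.+1 + k); split=> //; apply/andP; split; lia.
exists (nth 0 pi j, gg_mark pi j) => //.
rewrite mem_filter close_ij; apply/(nthP (0, 0)); exists (j - i.+1).
  by rewrite size_zip size_drops minnn size_drop size_gg_marks; lia.
by rewrite nth_zip // !nth_drop subnKC.
Qed.

Lemma gg_mark_gt0 pi i : i < size pi -> 0 < gg_mark pi i.
Proof.
move=> lt_i; rewrite (gg_markE lt_i).
by case: (smallest_pos_not_inP (close_later_marks pi i)).
Qed.

Lemma gg_mark_close_neq pi i j : i < j < size pi ->
  gg_close (nth 0 pi i) (nth 0 pi j) -> gg_mark pi j != gg_mark pi i.
Proof.
move=> /andP[lt_ij lt_j] close_ij; have lt_i := ltn_trans lt_ij lt_j.
have [_ mark_notin _] := smallest_pos_not_inP (close_later_marks pi i).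
rewrite (gg_markE lt_i); apply: contraNneq mark_notin => <-.
by apply/(mem_close_later_marks _ lt_i); exists j; rewrite lt_ij lt_j.
Qed.

Lemma gg_mark_below pi i v : i < size pi -> 0 < v < gg_mark pi i ->
  exists j, [/\ i < j < size pi, gg_close (nth 0 pi i) (nth 0 pi j) & gg_mark pi j = v].
Proof.
move=> lt_i; rewrite gg_markE //.
have [_ _ below_mark] := smallest_pos_not_inP (close_later_marks pi i).
by move/below_mark/(mem_close_later_marks v lt_i).
Qed.

Lemma gg_close_refl x : gg_close x x.
Proof. by rewrite /gg_close subnn; case: odd. Qed.

Lemma gg_close_even x z : ~~ odd x -> gg_close x z = (x - z <= 2).
Proof. by rewrite /gg_close => /negbTE ->. Qed.

Lemma sorted_geq_nth (s : seq nat) i j :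
  sorted geq s -> i <= j -> j < size s -> nth 0 s j <= nth 0 s i.
Proof.
move=> s_sorted le_ij lt_j.
apply: (sorted_leq_nth (rev_trans leq_trans) leqnn) => //.
by rewrite inE (leq_ltn_trans le_ij).
Qed.

Lemma uniq_zip_gg_marks pi : uniq (zip pi (gg_marks pi)).
Proof.
apply/(uniqP (0, 0)) => i j; rewrite !inE size_zip size_gg_marks minnn => lt_i lt_j.
rewrite !nth_zip ?size_gg_marks // => -[eq_parts eq_marks].
wlog lt_ij : i j lt_i lt_j eq_parts eq_marks / i < j.
  move=> wlog_ij; case: (ltngtP i j) => // [lt_ij|lt_ji]; first exact: wlog_ij.
  by apply/esym/wlog_ij.
have := @gg_mark_close_neq pi i j; rewrite lt_ij lt_j -eq_parts gg_close_refl.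
by rewrite /gg_mark eq_marks eqxx => /(_ isT isT).
Qed.

Definition marked_part (pi : seq nat) (a m : nat) : bool :=
  (a, m) \in zip pi (gg_marks pi).

Lemma marked_partP pi a m :
  reflect (exists i, [/\ i < size pi, nth 0 pi i = a & gg_mark pi i = m])
          (marked_part pi a m).
Proof.
have size_zip_marks : size (zip pi (gg_marks pi)) = size pi.
  by rewrite size_zip size_gg_marks minnn.
apply: (iffP (nthP (0, 0))) => [[i]|[i [lt_i <- <-]]]; rewrite size_zip_marks.
  by move=> lt_i; rewrite nth_zip ?size_gg_marks // => -[<- <-]; exists i.
by exists i; rewrite // nth_zip ?size_gg_marks.
Qed.

Lemma mem_marked_parts m pi a : (a \in marked_parts m pi) = marked_part pi a m.
Proof.
apply/mapP/idP => [[[b n]]|a_m]; last by exists (a, m); rewrite // mem_filter /= eqxx.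
by rewrite mem_filter /= => /andP[/eqP-> ?] ->.
Qed.

Lemma marked_part_mem pi a m : marked_part pi a m -> a \in pi.
Proof. by case/marked_partP=> i [lt_i <- _]; apply: mem_nth. Qed.

Lemma marked_part_gt0 pi a m : marked_part pi a m -> 0 < m.
Proof. by case/marked_partP=> i [lt_i _ <-]; apply: gg_mark_gt0. Qed.

Lemma marked_part_close_neq pi x z m : sorted geq pi -> z < x -> gg_close x z ->
  marked_part pi x m -> ~~ marked_part pi z m.
Proof.
move=> pi_sorted lt_zx close_xz /marked_partP[i [lt_i x_i mark_i]].
apply/marked_partP => -[j [lt_j z_j mark_j]].
have lt_ij : i < j.
  rewrite ltnNge; apply: contraL lt_zx => /(sorted_geq_nth pi_sorted)/(_ lt_i).
  by rewrite x_i z_j -leqNgt.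
have := @gg_mark_close_neq pi i j; rewrite lt_ij lt_j x_i z_j close_xz.
by rewrite mark_i mark_j eqxx => /(_ isT isT).
Qed.

Lemma marked_parts_sorted m pi : sorted geq pi -> sorted gtn (marked_parts m pi).
Proof.
move=> pi_sorted; rewrite gtn_sorted_uniq_geq; apply/andP; split.
  rewrite map_inj_in_uniq ?filter_uniq ?uniq_zip_gg_marks //.
  by move=> [a n] [b n'] /[!mem_filter] /andP[/eqP/= -> _] /andP[/eqP/= -> _] /= ->.
apply: (subseq_sorted (rev_trans leq_trans) _ pi_sorted).
rewrite -[X in subseq _ X](@unzip1_zip _ _ pi (gg_marks pi)) ?size_gg_marks //.
exact/map_subseq/filter_subseq.
Qed.

Lemma count_mem_gt1 (T : eqType) (x0 : T) (s : seq T) v : 1 < count_mem v s ->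
  exists i j, [/\ i < j < size s, nth x0 s i = v & nth x0 s j = v].
Proof.
elim: s => [|x s IHs] //=; case: eqP => [->|_] /= count_gt.
  have v_in : v \in s by rewrite -has_pred1 has_count -ltnS -add1n.
  by exists 0, (index v s).+1; split; rewrite /= ?ltnS ?index_mem ?nth_index.
have [i [j [/andP[lt_ij lt_j] s_i s_j]]] := IHs count_gt.
by exists i.+1, j.+1; rewrite /= !ltnS lt_ij lt_j.
Qed.

Lemma nth_stypes_aux pi prev ys i : i < size ys ->
  exists prev',
    nth s_none (stypes_aux pi prev ys) i = (stype_step pi prev' (nth 0 ys i)).1.
Proof.
by elim: ys prev i => [|y ys IHys] prev [|i] //= lt_i; [exists prev | apply: IHys].
Qed.

Lemma start_typeE pi b : 0 < b <= start_l pi -> b <= Nmark 2 pi ->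
  exists prev, start_type pi b = (stype_step pi prev (pi2 pi b)).1.
Proof.
move=> /andP[b_gt0 le_bl] le_bN; rewrite /start_type le_bl.
have [|prev ->] := @nth_stypes_aux pi None (take (start_l pi) (marked_parts 2 pi)) b.-1.
  by rewrite size_take_min /Nmark in le_bN *; lia.
by exists prev; rewrite nth_take //; lia.
Qed.

Lemma start_type_s3_le_start_l pi b : start_type pi b = s_3 -> b <= start_l pi.
Proof. by rewrite /start_type; case: ifP. Qed.

Lemma start_type_s3_one_marked pi b : 0 < b <= Nmark 2 pi ->
  start_type pi b = s_3 -> one_marked pi (pi2 pi b).
Proof.
move=> /andP[b_gt0 le_bN] s3_b; have le_bl := start_type_s3_le_start_l s3_b.
have [|prev] := @start_typeE pi b _ le_bN; first by rewrite b_gt0.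
rewrite s3_b; case: prev => [sg|] /=.
all: by do 3 (case: ifP => // _); case: ifP.
Qed.

Lemma start_type_s3 pi b : 0 < b <= start_l pi -> b <= Nmark 2 pi ->
  ~~ one_marked pi (pi2 pi b - 1) -> ~~ one_marked pi (pi2 pi b - 2) ->
  ~~ one_marked pi (pi2 pi b + 2) -> one_marked pi (pi2 pi b) ->
  start_type pi b = s_3.
Proof.
move=> le_bl le_bN /negbTE no1 /negbTE no2 /negbTE no3 yes.
have [prev ->] := start_typeE le_bl le_bN.
by case: prev => [sg|] /=; rewrite no1 no2 no3 yes.
Qed.

Section EvenPartMarkedOneAndTwo.

Variables (pi : seq nat) (y : nat).
Hypothesis pi_sorted : sorted geq pi.
Hypothesis y_even : ~~ odd y.
Hypothesis y1_notin : y + 1 \notin pi.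
Hypothesis y3_notin : y + 3 \notin pi.
Hypothesis y_marked1 : marked_part pi y 1.
Hypothesis y_marked2 : marked_part pi y 2.

Lemma marked_y2_gt2 m : marked_part pi (y + 2) m -> 2 < m.
Proof.
move=> y2_m; have m_gt0 := marked_part_gt0 y2_m.
have close_y2_y : gg_close (y + 2) y.
  by rewrite gg_close_even ?addKn // oddD (negbTE y_even).
have lt_y_y2 : y < y + 2 by rewrite addn2.
have := marked_part_close_neq pi_sorted lt_y_y2 close_y2_y y2_m.
by case: m y2_m m_gt0 => [|[|[|m]]] //; rewrite ?y_marked1 ?y_marked2.
Qed.

Lemma y4_marked_below_mark d v : d < size pi -> nth 0 pi d = y + 4 ->
  0 < v <= gg_mark pi d -> v <= 2 -> marked_part pi (y + 4) v.
Proof.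
move=> lt_d d_y4 /andP[v_gt0]; rewrite leq_eqVlt => /orP[/eqP v_d _|lt_vd le_v2].
  by apply/marked_partP; exists d.
have [j [/andP[lt_dj lt_j] close_dj mark_j]] : exists j, [/\ d < j < size pi,
    gg_close (nth 0 pi d) (nth 0 pi j) & gg_mark pi j = v].
  by apply: gg_mark_below; rewrite ?v_gt0.
have le_jd := sorted_geq_nth pi_sorted (ltnW lt_dj) lt_j.
rewrite d_y4 gg_close_even ?oddD ?(negbTE y_even) // in close_dj le_jd.
have j_marked : marked_part pi (nth 0 pi j) v by apply/marked_partP; exists j.
have j_ne_y2 : nth 0 pi j != y + 2.
  apply: contraTneq le_v2 => j_y2; rewrite -ltnNge.
  by apply: marked_y2_gt2; rewrite -j_y2.
have j_ne_y3 : nth 0 pi j != y + 3 by apply: contraNneq y3_notin => <-; apply: mem_nth.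
suff -> : y + 4 = nth 0 pi j by [].
lia.
Qed.

Lemma y4_twice_marked12 : 1 < count_mem (y + 4) pi ->
  marked_part pi (y + 4) 1 /\ marked_part pi (y + 4) 2.
Proof.
case/(count_mem_gt1 0) => i [j [/andP[lt_ij lt_j] i_y4 j_y4]].
have lt_i := ltn_trans lt_ij lt_j.
have mark_i_gt0 := gg_mark_gt0 lt_i.
have mark_j_gt0 := gg_mark_gt0 lt_j.
have neq_ij : gg_mark pi j != gg_mark pi i.
  by apply: gg_mark_close_neq; rewrite ?lt_ij // i_y4 j_y4 gg_close_refl.
split; first exact: (y4_marked_below_mark lt_i).
have [d [lt_d d_y4 mark_d]] :
    exists d, [/\ d < size pi, nth 0 pi d = y + 4 & 1 < gg_mark pi d].
  by case: (ltnP 1 (gg_mark pi i)) => [|le_i1]; [exists i | exists j; split=> //; lia].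
exact: (y4_marked_below_mark lt_d).
Qed.

Lemma pi2_pred_y4 b : 0 < b <= Nmark 2 pi -> pi2 pi b = y ->
  marked_part pi (y + 4) 2 -> 1 < b /\ pi2 pi b.-1 = y + 4.
Proof.
move=> /andP[_ le_bN] pi2_b y4_marked2; rewrite /pi2 /Nmark in pi2_b le_bN *.
set M := marked_parts 2 pi in pi2_b le_bN *.
have M_gtn : sorted gtn M := marked_parts_sorted 2 pi_sorted.
have M_geq : sorted geq M by move: M_gtn; rewrite gtn_sorted_uniq_geq => /andP[].
have y4_M : y + 4 \in M by rewrite mem_marked_parts.
have lt_iM : index (y + 4) M < size M by rewrite index_mem.
have lt_ib : index (y + 4) M < b.-1.
  rewrite ltnNge; apply/negP => /(sorted_geq_nth M_geq)/(_ lt_iM).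
  by rewrite nth_index // pi2_b leqNgt -{1}[y]addn0 ltn_add2l.
case: b lt_ib le_bN pi2_b => [|[|c]] //= lt_ic lt_c1M pi2_c; split=> //.
have lt_cM := ltnW lt_c1M.
set w := nth 0 M c.
have w_gt : y < w.
  by rewrite -pi2_c; apply: (sorted_ltn_nth (rev_trans ltn_trans)); rewrite ?inE.
have w_le : w <= y + 4.
  by rewrite -[in leqRHS](nth_index 0 y4_M); apply: sorted_geq_nth.
have w_marked : marked_part pi w 2 by rewrite -mem_marked_parts mem_nth.
have w_in := marked_part_mem w_marked.
have w_ne_y1 : w != y + 1 by apply: contraNneq y1_notin => <-.
have w_ne_y3 : w != y + 3 by apply: contraNneq y3_notin => <-.
have w_ne_y2 : w != y + 2.
  by apply: contraTneq w_marked => ->; apply/negP => /marked_y2_gt2.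
by clear - w_gt w_le w_ne_y1 w_ne_y2 w_ne_y3; lia.
Qed.

Lemma start_type_y4 b : 0 < b <= start_l pi -> b <= Nmark 2 pi ->
  pi2 pi b = y + 4 -> marked_part pi (y + 4) 1 -> start_type pi b = s_3.
Proof.
move=> le_bl le_bN pi2_b y4_marked1.
apply: start_type_s3 => //; rewrite pi2_b //.
- by apply: contra y3_notin => /marked_part_mem; rewrite -addnBA.
- by apply/negP; rewrite -addnBA // => /marked_y2_gt2.
- apply: contraL y4_marked1 => y6_marked1.
  have lt_y4_y6 : y + 4 < y + 4 + 2 by rewrite addn2.
  have close_y6_y4 : gg_close (y + 4 + 2) (y + 4).
    by rewrite gg_close_even ?addKn // !oddD (negbTE y_even).
  exact: marked_part_close_neq pi_sorted lt_y4_y6 close_y6_y4 y6_marked1.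
Qed.

End EvenPartMarkedOneAndTwo.

Theorem proposition2p7 (k r p t : nat) (pi : seq nat) (p1 : nat) :
  3 <= r -> r <= k ->
  in_Clt k r p t pi ->
  (* pi^(2)_p = 2t+2 (p = 0 is excluded since pi^(2)_0 = +oo) *)
  0 < p -> pi2 pi p = 2 * t + 2 ->
  start_type pi p = s_3 ->
  (* p1 is the smallest integer with 1 <= p1 <= p such that
     pi^(2)_{p1} = pi^(2)_p + 4(p - p1) and pi^(2)_p, ..., pi^(2)_{p1}
     all have the same starting type *)
  1 <= p1 <= p ->
  pi2 pi p1 = pi2 pi p + 4 * (p - p1) ->
  (forall j, p1 <= j <= p -> start_type pi j = start_type pi p) ->
  (forall q, 1 <= q < p1 ->
     ~ (pi2 pi q = pi2 pi p + 4 * (p - q) /\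
        (forall j, q <= j <= p -> start_type pi j = start_type pi p))) ->
  count_mem (pi2 pi p1 + 4) pi <= 1.
Proof.
move=> _ _ [[/andP[pi_sorted _] _] [odd_lt [le_pN _]]] p_gt0 pi2_p s3_p
  /andP[p1_gt0 le_p1p] pi2_p1 same_type p1_min.
set y := pi2 pi p1 in pi2_p1 *.
have y_double : y = 2 * (t + 1 + 2 * (p - p1)) by rewrite pi2_p1 pi2_p; lia.
have y_even : ~~ odd y by rewrite y_double oddM.
have odd_notin c : odd c -> y <= c -> c \notin pi.
  by move=> c_odd le_yc; apply/negP => /odd_lt/(_ c_odd); lia.
have y1_notin : y + 1 \notin pi by rewrite odd_notin ?leq_addr // oddD (negbTE y_even).
have y3_notin : y + 3 \notin pi by rewrite odd_notin ?leq_addr // oddD (negbTE y_even).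
have p1_range : 0 < p1 <= Nmark 2 pi by rewrite p1_gt0 (leq_trans le_p1p).
have y_marked1 : marked_part pi y 1.
  by apply: start_type_s3_one_marked p1_range _; rewrite same_type ?le_p1p ?leqnn.
have y_marked2 : marked_part pi y 2.
  by rewrite -mem_marked_parts mem_nth // prednK //; case/andP: p1_range.
rewrite leqNgt; apply/negP.
move/(y4_twice_marked12 pi_sorted y_even y1_notin y3_notin y_marked1 y_marked2).
move=> [y4_marked1 y4_marked2].
have [lt_1p1 pi2_pred] := pi2_pred_y4 pi_sorted y_even y1_notin y3_notin
  y_marked1 y_marked2 p1_range erefl y4_marked2.
have le_pl := start_type_s3_le_start_l s3_p.
apply: (p1_min p1.-1); first by lia.
split=> [|j /andP[le_j le_jp]]; first by rewrite pi2_pred pi2_p1; lia.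
have [lt_jp1|le_p1j] := ltnP j p1; last by rewrite same_type ?le_p1j.
have -> : j = p1.-1 by lia.
rewrite s3_p; apply: (start_type_y4 pi_sorted y_even y3_notin y_marked1 y_marked2).
all: by [rewrite pi2_pred | lia].
Qed.
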